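(* Let $\beta_1\in(0,1)$, $\beta_0=1-\beta_1$, $\rho\in(0,1)$, $\theta\in(0,1)$, $\lambda\ge 0$ and $N_0>0$. For $s\in[0,1]$ define $$\bar m_2(s)=\frac{\beta_0\rho}{\rho+\beta_1 s(1-\rho)},\qquad \bar m_4(s)=\frac{\beta_1\rho}{\rho+\beta_1 s(1-\rho)},$$ and $$E(s)=\frac{\theta N_0\, s}{1-\theta \bar m_4(s)}+\lambda\big(\bar m_2(s)+\bar m_4(s)\big).$$ If $$N_0\le \frac{\lambda(1-\rho)(1-\beta_1\theta)^2}{\rho\,\theta^2},$$ then $E$ is convex on $[0,1]$.
   Context: Mean-field model of a dense wireless network with two channel states (BAD with probability $\beta_0$, GOOD with probability $\beta_1$, i.i.d. over slots), packet arrival probability $\rho$ per slot, buffer size one, SINR decoding threshold $\theta<1$, noise power $N_0$, and weight $\lambda$ on queue length. The population is described by the fractions $m_1,m_2,m_3,m_4$ of users in states (BAD, empty queue), (BAD, one packet), (GOOD, empty queue), (GOOD, one packet). Only users in state (GOOD, one packet) may be scheduled; $s\in[0,1]$ is the fraction of them that transmit. For a constant control $s$, the equilibrium fractions of the fluid dynamics are $\bar m_1(s)=\frac{\beta_0\beta_1(1-\rho)s}{\rho+\beta_1 s(1-\rho)}$, $\bar m_2(s)$, $\bar m_3(s)=\frac{\beta_1^2(1-\rho)s}{\rho+\beta_1 s(1-\rho)}$, $\bar m_4(s)$ as given, and $E(s)$ is the resulting equilibrium (average) cost: power $\theta N_0 s/(1-\theta\bar m_4(s))$ plus $\lambda$ times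 the fraction of users with a packet. *)

From Stdlib Require Import Reals.
Open Scope R_scope.

Definition m2bar (beta1 rho s : R) : R :=
  ((1 - beta1) * rho) / (rho + beta1 * s * (1 - rho)).

Definition m4bar (beta1 rho s : R) : R :=
  (beta1 * rho) / (rho + beta1 * s * (1 - rho)).

Definition Ecost (beta1 rho theta lambda N0 s : R) : R :=
  theta * N0 * s / (1 - theta * m4bar beta1 rho s)
  + lambda * (m2bar beta1 rho s + m4bar beta1 rho s).

Definition convex_on (f : R -> R) (a b : R) : Prop :=
  forall x y t, a <= x <= b -> a <= y <= b -> 0 <= t <= 1 ->
    f (t * x + (1 - t) * y) <= t * f x + (1 - t) * f y.

(** Write [D(s) = rho + beta1 (1 - rho) s] and [q = 1 - beta1 theta].  Since
    [1 - theta m4bar(s) = (q rho + beta1 (1 - rho) s) / D(s)], the cost [E] is an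
    affine function plus [P / D(s) - K / (q rho + beta1 (1 - rho) s)] with
    [P = lambda rho] and [K = theta^2 N0 rho^2 q / (1 - rho)].  Along an affine
    [u > 0], the convexity gap of [1/u] between [x] and [y] is
    [t (1 - t) (u x - u y)^2 / (u x * u y * u z)] with [z = t x + (1 - t) y]; as
    [q D(s) <= q rho + beta1 (1 - rho) s], the gap of the positive term dominates
    that of the negative one as soon as [K <= P q^3], which is exactly the
    hypothesis on [N0]. *)
From Stdlib Require Import Reals Lra Psatz.
Open Scope R_scope.

Lemma convex_on_ext (f g : R -> R) (a b : R) :
  (forall s, a <= s <= b -> f s = g s) -> convex_on g a b -> convex_on f a b.
Proof.
  intros Efg Hg x y t Hx Hy Ht.
  rewrite !Efg; try lra.
  - now apply Hg.
  - split; nra.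
Qed.

Lemma convex_on_affine_plus (f : R -> R) (alpha beta a b : R) :
  convex_on f a b -> convex_on (fun s => alpha * s + beta + f s) a b.
Proof.
  intros Hf x y t Hx Hy Ht.
  pose proof (Hf x y t Hx Hy Ht).
  nra.
Qed.

Lemma Rinv_convexity_gap (t u v : R) :
  0 < u -> 0 < v -> 0 < t * u + (1 - t) * v ->
  t / u + (1 - t) / v - 1 / (t * u + (1 - t) * v) =
  t * (1 - t) * (u - v) ^ 2 / (u * v * (t * u + (1 - t) * v)).
Proof. intros; field; lra. Qed.

Lemma Rdiv_prod3_le (q P K D1 D2 D3 u1 u2 u3 : R) :
  0 < q -> 0 < D1 -> 0 < D2 -> 0 < D3 ->
  q * D1 <= u1 -> q * D2 <= u2 -> q * D3 <= u3 ->
  0 <= K <= P * q ^ 3 ->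
  K / (u1 * u2 * u3) <= P / (D1 * D2 * D3).
Proof.
  intros Hq H1 H2 H3 Hu1 Hu2 Hu3 HK.
  assert (HD : 0 < q ^ 3 * (D1 * D2 * D3))
    by (repeat apply Rmult_lt_0_compat; try apply pow_lt; lra).
  assert (Hqu : q ^ 3 * (D1 * D2 * D3) <= u1 * u2 * u3).
  { assert (0 < q * D1) by (apply Rmult_lt_0_compat; lra).
    assert (0 < q * D2) by (apply Rmult_lt_0_compat; lra).
    assert (0 < q * D3) by (apply Rmult_lt_0_compat; lra).
    replace (q ^ 3 * (D1 * D2 * D3)) with ((q * D1) * (q * D2) * (q * D3)) by ring.
    apply Rmult_le_compat; [nra | lra | apply Rmult_le_compat | ]; lra. }
  assert (Hu : 0 < u1 * u2 * u3) by lra.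
  apply Rle_trans with (P * q ^ 3 / (u1 * u2 * u3)).
  - apply Rmult_le_compat_r; [left; apply Rinv_0_lt_compat|]; lra.
  - apply Rle_trans with (P * q ^ 3 / (q ^ 3 * (D1 * D2 * D3))).
    + apply Rmult_le_compat_l; [nra | now apply Rinv_le_contravar].
    + right; field; repeat split; apply Rgt_not_eq; try apply pow_lt; lra.
Qed.

Lemma convex_on_Rinv_difference (P K a b q M : R) :
  0 < a -> 0 <= b -> 0 < q <= 1 -> 0 <= K <= P * q ^ 3 ->
  convex_on (fun s => P / (a + b * s) - K / (q * a + b * s)) 0 M.
Proof.
  intros Ha Hb Hq HK x y t Hx Hy Ht.
  set (z := t * x + (1 - t) * y).
  assert (Hz : 0 <= z) by (unfold z; nra).
  assert (EL : a + b * z = t * (a + b * x) + (1 - t) * (a + b * y))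
    by (unfold z; ring).
  assert (El : q * a + b * z = t * (q * a + b * x) + (1 - t) * (q * a + b * y))
    by (unfold z; ring).
  assert (HL : forall s, 0 <= s -> 0 < a + b * s) by (intros; nra).
  assert (Hl : forall s, 0 <= s -> 0 < q * a + b * s) by (intros; nra).
  assert (Hql : forall s, 0 <= s -> q * (a + b * s) <= q * a + b * s).
  { intros s Hs; assert (0 <= b * s) by (apply Rmult_le_pos; lra); nra. }
  pose proof (HL x (proj1 Hx)); pose proof (HL y (proj1 Hy)); pose proof (HL z Hz).
  pose proof (Hl x (proj1 Hx)); pose proof (Hl y (proj1 Hy)); pose proof (Hl z Hz).
  pose proof (Rinv_convexity_gap t (a + b * x) (a + b * y)) as GL.
  pose proof (Rinv_convexity_gap t (q * a + b * x) (q * a + b * y)) as Gl.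
  rewrite <- EL in GL; rewrite <- El in Gl.
  replace (a + b * x - (a + b * y)) with (b * (x - y)) in GL by ring.
  replace (q * a + b * x - (q * a + b * y)) with (b * (x - y)) in Gl by ring.
  set (w := t * (1 - t) * (b * (x - y)) ^ 2) in *.
  assert (Hw : 0 <= w) by (unfold w; apply Rmult_le_pos; [nra | apply pow2_ge_0]).
  pose proof (Rdiv_prod3_le q P K _ _ _ _ _ _ (proj1 Hq)
                (HL x (proj1 Hx)) (HL y (proj1 Hy)) (HL z Hz)
                (Hql x (proj1 Hx)) (Hql y (proj1 Hy)) (Hql z Hz) HK) as Hdom.
  assert (Egap :
    t * (P / (a + b * x) - K / (q * a + b * x))
    + (1 - t) * (P / (a + b * y) - K / (q * a + b * y))
    - (P / (a + b * z) - K / (q * a + b * z))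
    = w * (P / ((a + b * x) * (a + b * y) * (a + b * z))
           - K / ((q * a + b * x) * (q * a + b * y) * (q * a + b * z)))).
  { transitivity
      (P * (t / (a + b * x) + (1 - t) / (a + b * y) - 1 / (a + b * z))
       - K * (t / (q * a + b * x) + (1 - t) / (q * a + b * y) - 1 / (q * a + b * z))).
    - field; repeat split; lra.
    - rewrite GL, Gl by lra; field; repeat split; lra. }
  assert (0 <= w * (P / ((a + b * x) * (a + b * y) * (a + b * z))
           - K / ((q * a + b * x) * (q * a + b * y) * (q * a + b * z))))
    by (apply Rmult_le_pos; lra).
  lra.
Qed.

Lemma Ecost_decomposition (beta1 rho theta lambda N0 s : R) :
  0 < beta1 < 1 -> 0 < rho < 1 -> 0 < theta < 1 -> 0 <= s ->
  Ecost beta1 rho theta lambda N0 s =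
  theta * N0 * s + theta ^ 2 * N0 * rho / (1 - rho)
  + (lambda * rho / (rho + beta1 * (1 - rho) * s)
     - theta ^ 2 * N0 * rho ^ 2 * (1 - beta1 * theta) / (1 - rho)
       / ((1 - beta1 * theta) * rho + beta1 * (1 - rho) * s)).
Proof.
  intros Hb Hr Ht Hs.
  assert (Hbs : 0 <= beta1 * s * (1 - rho))
    by (repeat apply Rmult_le_pos; lra).
  assert (Hq : 0 < 1 - beta1 * theta) by nra.
  assert (HD : 0 < rho + beta1 * s * (1 - rho)) by lra.
  assert (Hu : 0 < (1 - beta1 * theta) * rho + beta1 * (1 - rho) * s) by nra.
  assert (Edenom : 1 - theta * m4bar beta1 rho s
    = ((1 - beta1 * theta) * rho + beta1 * (1 - rho) * s)
      / (rho + beta1 * s * (1 - rho))).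
  { unfold m4bar; field; lra. }
  unfold Ecost; rewrite Edenom; unfold m2bar, m4bar.
  field; repeat split; lra.
Qed.

Theorem proposition3 (beta1 rho theta lambda N0 : R) :
  0 < beta1 < 1 -> 0 < rho < 1 -> 0 < theta < 1 -> 0 <= lambda -> 0 < N0 ->
  N0 <= lambda * (1 - rho) * (1 - beta1 * theta) ^ 2 / (rho * theta ^ 2) ->
  convex_on (Ecost beta1 rho theta lambda N0) 0 1.
Proof.
  intros Hb Hr Ht Hl HN HN0.
  set (q := 1 - beta1 * theta) in HN0 |- *.
  assert (Hq : 0 < q <= 1) by (unfold q; nra).
  assert (HK : theta ^ 2 * N0 * rho ^ 2 * q / (1 - rho) <= lambda * rho * q ^ 3).
  { apply (Rmult_le_reg_r ((1 - rho) / (theta ^ 2 * rho ^ 2 * q))).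
    - apply Rdiv_lt_0_compat; [lra | repeat apply Rmult_lt_0_compat; try apply pow_lt; lra].
    - replace (theta ^ 2 * N0 * rho ^ 2 * q / (1 - rho) * ((1 - rho) / (theta ^ 2 * rho ^ 2 * q)))
        with N0 by (field; repeat split; lra).
      eapply Rle_trans; [exact HN0 | right; field; repeat split; lra]. }
  apply convex_on_ext with (1 := fun s Hs =>
    Ecost_decomposition beta1 rho theta lambda N0 s Hb Hr Ht (proj1 Hs)).
  apply convex_on_affine_plus.
  fold q.
  apply convex_on_Rinv_difference; try nra.
  split; [|exact HK].
  left; apply Rdiv_lt_0_compat; [repeat apply Rmult_lt_0_compat; try apply pow_lt|]; lra.
Qed.
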